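(* There exist maps $A,B:\{0,1\}^n\to(\{a,b\}\cup\{\epsilon\})^{t}$ with $t=O(n)$, say $A(x)=(\alpha_1,\dots,\alpha_t)$ and $B(y)=(\beta_1,\dots,\beta_t)$, such that for every $(x,y)$ in the domain $D_n$ of $PIP_2$, the word $\alpha_1\beta_1\alpha_2\beta_2\cdots\alpha_t\beta_t$ belongs to $L_5$ if and only if $PIP_2(x,y)=1$. Consequently $N^1(L_5)(O(n))\ge N^1(PIP_2)(n)$, i.e. any lower bound $N^1(PIP_2)=\Omega(n)$ would give $N^1(L_5)=\Omega(n)$.
   Context: $L_5$ is the language recognized by the deterministic automaton with states $1,2,3,4,5$, initial state $1$, accepting set $\{5\}$, and transitions $\delta(1,a)=\delta(1,b)=2$, $\delta(2,a)=5$, $\delta(2,b)=3$, $\delta(3,a)=4$, $\delta(3,b)=5$, $\delta(4,a)=3$, $\delta(4,b)=1$, $\delta(5,a)=\delta(5,b)=5$. $\epsilon$ denotes the empty word. $PIP_2$ is the promise function with domain $D_n\subseteq\{0,1\}^n\times\{0,1\}^n$ consisting of all $(x,y)$ with $\sum_{i}x_iy_i$ odd, together with all $(x,y)$ with $\sum_ix_iy_i$ even such that for every $i$: if $x_i=0,y_i=1$ then $\sum_{j<i}x_jy_j$ is even, and if $x_i=1,y_i=0$ then $\sum_{j<i}x_jy_j$ is odd; on $D_n$, $PIP_2(x,y)=1$ iff $\sum_ix_iy_i$ is odd. Alice holds $x$, Bob holds $y$. $N^1$ denotes non-deterministic communication complexity (for a promise function, covering of the 1-inputs by rectangles containing no 0-input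 of the domain); for $L_5$, $N^1(L_5)(n)$ is that of the problem where Alice receives $a_1,a_3,\dots,a_{2n-1}$, Bob receives $a_2,\dots,a_{2n}$, each in $\{a,b,\epsilon\}$, deciding whether $a_1\cdots a_{2n}\in L_5$. *)

From mathcomp Require Import all_boot.
Set Implicit Arguments. Unset Strict Implicit. Unset Printing Implicit Defensive.

(* Letters: a is encoded as false, b as true.
   Symbols in {a, b, epsilon}: Some false = a, Some true = b, None = epsilon. *)
Definition letter_a : bool := false.
Definition letter_b : bool := true.
Definition sym := option bool.

Definition delta5 (q : nat) (c : bool) : nat :=
  match q, c with
  | 1, _ => 2
  | 2, false => 5
  | 2, true => 3
  | 3, false => 4
  | 3, true => 5
  | 4, false => 3
  | 4, true => 1
  | _, _ => 5   (* state 5 (the only other reachable state) loops *)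
  end.

Definition inL5 (w : seq bool) : bool := foldl delta5 1 w == 5.

(* The word alpha_1 beta_1 ... alpha_t beta_t, with epsilons erased. *)
Definition interleave t (al be : t.-tuple sym) : seq bool :=
  pmap id (flatten [seq [:: p.1; p.2] | p <- zip al be]).

Definition pref n (x y : n.-tuple bool) (i : nat) : nat :=
  \sum_(j < n | j < i) (tnth x j && tnth y j).

Definition PIP2_dom n (x y : n.-tuple bool) : bool :=
  odd (pref x y n) ||
  [forall i : 'I_n,
     ((~~ tnth x i && tnth y i) ==> ~~ odd (pref x y i)) &&
     ((tnth x i && ~~ tnth y i) ==> odd (pref x y i))].

Definition PIP2 n (x y : n.-tuple bool) : bool := odd (pref x y n).

Definition has_cover (X Y : finType) (D f : X -> Y -> bool) (k : nat) : bool :=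
  [exists R : {ffun 'I_k -> {set X} * {set Y}},
     [forall i, forall x, forall y,
        [&& x \in (R i).1, y \in (R i).2 & D x y] ==> f x y] &&
     [forall x, forall y,
        (D x y && f x y) ==> [exists i, (x \in (R i).1) && (y \in (R i).2)]]].

(* minimum cover size (a cover of size #|X|*#|Y| by singletons always exists) *)
Definition cover_number (X Y : finType) (D f : X -> Y -> bool) : nat :=
  find (has_cover D f) (iota 0 (#|X| * #|Y|).+1).

Definition N1 (X Y : finType) (D f : X -> Y -> bool) : nat :=
  up_log 2 (cover_number D f).

Definition N1_PIP2 (n : nat) : nat :=
  N1 (@PIP2_dom n) (@PIP2 n).

(* L_5 with parameter m: Alice gets a_1,a_3,...,a_{2m-1}, Bob gets
   a_2,...,a_{2m}; total function (domain = everything). *)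
Definition N1_L5 (m : nat) : nat :=
  N1 (fun _ _ : m.-tuple sym => true)
     (fun al be : m.-tuple sym => inL5 (interleave al be)).

From mathcomp Require Import all_boot.
Set Implicit Arguments. Unset Strict Implicit. Unset Printing Implicit Defensive.

(* Alice encodes each bit x_i by a 3-symbol gadget and Bob each bit y_i by a
   3-symbol gadget; their interleaving is one of the four words ab, bbab, aa,
   abab according to (x_i, y_i) = (1,1), (1,0), (0,1), (0,0).  Reading these
   blocks, the automaton of L_5 simulates a three-state "promise checker":
   state 3 = prefix inner product even, state 1 = odd, and the accepting sink 5
   = the promise condition has already been violated.  A leading block ab takes
   the start state 1 to state 3 and a trailing block aa accepts exactly from
   the states 1 and 5.  On the domain of PIP_2 a violation forces an odd inner
   product, so the word is in L_5 exactly when PIP_2(x,y) = 1. *)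

Lemma cover_number_le (X Y : finType) (D f : X -> Y -> bool) (k : nat) :
  has_cover D f k -> cover_number D f <= k.
Proof.
move=> cover_k; rewrite /cover_number.
case: (ltnP k (#|X| * #|Y|).+1) => hk.
  rewrite leqNgt; apply/negP => /(before_find 0).
  by rewrite nth_iota // add0n cover_k.
by apply: leq_trans (find_size _ _) _; rewrite size_iota.
Qed.

Lemma cover_number_cases (X Y : finType) (D f : X -> Y -> bool) :
  has_cover D f (cover_number D f) \/ cover_number D f = (#|X| * #|Y|).+1.
Proof.
rewrite /cover_number.
have [found | not_found] := boolP (has (has_cover D f) (iota 0 (#|X| * #|Y|).+1)).
  left; have := nth_find 0 found.
  by move: found; rewrite has_find size_iota => /nth_iota ->; rewrite add0n.
by right; rewrite (hasNfind not_found) size_iota.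
Qed.

Section CoverReduction.

Variables (X Y X' Y' : finType) (D f : X -> Y -> bool) (g : X' -> Y' -> bool).
Variables (A : X -> X') (B : Y -> Y').

Hypothesis reduction : forall x y, D x y -> g (A x) (B y) = f x y.

(* Preimages of the rectangles of a cover of [g] form a cover of [f]. *)
Lemma cover_pullback (k : nat) :
  has_cover (fun _ _ => true) g k -> has_cover D f k.
Proof.
case/existsP=> R /andP[/forallP R_sound /forallP R_complete].
apply/existsP; exists [ffun i => ([set x | A x \in (R i).1], [set y | B y \in (R i).2])].
apply/andP; split.
- apply/forallP=> i; apply/forallP=> x; apply/forallP=> y; apply/implyP.
  rewrite ffunE !inE => /and3P[Rx Ry Dxy]; rewrite -(reduction Dxy).
  by have /forallP/(_ (A x))/forallP/(_ (B y))/implyP-> := R_sound i; rewrite ?Rx ?Ry.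
- apply/forallP=> x; apply/forallP=> y; apply/implyP=> /andP[Dxy fxy].
  have /forallP/(_ (B y))/implyP := R_complete (A x).
  rewrite reduction // fxy => /(_ isT) /existsP[i /andP[Rx Ry]].
  by apply/existsP; exists i; rewrite ffunE !inE Rx Ry.
Qed.

(* N^1 of the promise problem is at most N^1 of the target function, provided
   the target inputs are at least as numerous (so that the default value of
   the cover number is larger on the target side). *)
Lemma N1_reduction :
  #|X| * #|Y| <= #|X'| * #|Y'| -> N1 D f <= N1 (fun _ _ => true) g.
Proof.
move=> card_le; rewrite /N1; apply: leq_up_log.
have [cover_g | ->] := cover_number_cases (fun _ _ => true) g.
  exact/cover_number_le/cover_pullback.
by apply: leq_trans (find_size _ _) _; rewrite size_iota ltnS.
Qed.

End CoverReduction.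

Definition promise_at (n : nat) (x y : n.-tuple bool) (i : 'I_n) : bool :=
  ((~~ tnth x i && tnth y i) ==> ~~ odd (pref x y i)) &&
  ((tnth x i && ~~ tnth y i) ==> odd (pref x y i)).

(* One step of the checker: [Some p] records the parity [p] of the inner
   product read so far, [None] records a violated promise condition. *)
Definition checker_step (st : option bool) (xy : bool * bool) : option bool :=
  if st is Some odd_so_far then
    match xy with
    | (true, true) => Some (~~ odd_so_far)
    | (false, true) => if odd_so_far then None else st
    | (true, false) => if odd_so_far then st else None
    | (false, false) => st
    end
  else None.

Definition checker_accepts (st : option bool) : bool := st != Some false.

Lemma pref0 (n : nat) (x y : n.-tuple bool) : pref x y 0 = 0.
Proof. by rewrite /pref big_pred0. Qed.

Lemma prefS (n : nat) (x y : n.-tuple bool) (i : 'I_n) :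
  pref x y i.+1 = pref x y i + (tnth x i && tnth y i).
Proof.
rewrite /pref (bigD1 i) //= addnC; congr (_ + _); apply: eq_bigl => j.
by rewrite -val_eqE ltnS leq_eqVlt; case: ltngtP.
Qed.

Lemma forall_ltS (n : nat) (P : pred 'I_n) (i : 'I_n) :
  [forall j : 'I_n, (j < i.+1) ==> P j] = [forall j : 'I_n, (j < i) ==> P j] && P i.
Proof.
apply/forallP/andP => [ok_all | [/forallP ok_lt ok_i] j].
  split; last exact: (implyP (ok_all i)).
  by apply/forallP=> j; apply/implyP=> lt_j; apply: (implyP (ok_all j)); apply: ltnW.
apply/implyP; rewrite ltnS leq_eqVlt => /orP[/eqP j_i | lt_j].
  by have -> : j = i by apply: val_inj.
exact: (implyP (ok_lt j)).
Qed.

Lemma checker_prefix (n : nat) (x y : n.-tuple bool) (i : nat) : i <= n ->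
  foldl checker_step (Some false) (take i (zip x y)) =
  if [forall j : 'I_n, (j < i) ==> promise_at x y j]
  then Some (odd (pref x y i)) else None.
Proof.
elim: i => [|i IH] lt_i_n.
  by rewrite take0 pref0; have -> : [forall j : 'I_n, (j < 0) ==> promise_at x y j]
    by apply/forallP.
pose i' := Ordinal lt_i_n.
have size_xy : size (zip x y) = n by rewrite size_zip !size_tuple minnn.
rewrite (take_nth (false, false)); last by rewrite size_xy.
rewrite foldl_rcons IH; last exact: ltnW.
rewrite nth_zip; last by rewrite !size_tuple.
rewrite -!(tnth_nth false _ i') (prefS x y i').
rewrite (forall_ltS (promise_at x y) i').
rewrite [promise_at x y i']/promise_at oddD.
case: [forall j : 'I_n, (j < i) ==> promise_at x y j] => //.
by case: (tnth x i'); case: (tnth y i'); case: (odd (pref x y i)).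
Qed.

Lemma checker_decides (n : nat) (x y : n.-tuple bool) : PIP2_dom x y ->
  checker_accepts (foldl checker_step (Some false) (zip x y)) = PIP2 x y.
Proof.
have size_xy : size (zip x y) = n by rewrite size_zip !size_tuple minnn.
rewrite -[zip x y]take_size size_xy checker_prefix //.
have -> : [forall j : 'I_n, (j < n) ==> promise_at x y j] = [forall j, promise_at x y j].
  by apply: eq_forallb => j; rewrite ltn_ord.
rewrite /PIP2_dom /PIP2 -/(promise_at x y).
by case: [forall j, _]; case: odd.
Qed.

Definition interleave_seq (s t : seq sym) : seq bool :=
  pmap id (flatten [seq [:: p.1; p.2] | p <- zip s t]).

Lemma interleave_seq_cat (s1 s2 t1 t2 : seq sym) : size s1 = size t1 ->
  interleave_seq (s1 ++ s2) (t1 ++ t2) = interleave_seq s1 t1 ++ interleave_seq s2 t2.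
Proof. by move=> size_eq; rewrite /interleave_seq zip_cat // map_cat flatten_cat pmap_cat. Qed.

(* Alice's gadget: 1 |-> (eps, b, eps) and 0 |-> (a, eps, eps);
   Bob's gadget:   1 |-> (a, eps, eps) and 0 |-> (b, a, b).  Interleaved:
   (1,1) -> ab,  (1,0) -> bbab,  (0,1) -> aa,  (0,0) -> abab. *)
Definition alice_gadget (b : bool) : seq sym :=
  if b then [:: None; Some letter_b; None] else [:: Some letter_a; None; None].
Definition bob_gadget (b : bool) : seq sym :=
  if b then [:: Some letter_a; None; None]
  else [:: Some letter_b; Some letter_a; Some letter_b].

Lemma size_alice_gadget (b : bool) : size (alice_gadget b) = 3.
Proof. by case: b. Qed.

Lemma size_bob_gadget (b : bool) : size (bob_gadget b) = 3.
Proof. by case: b. Qed.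

Definition dfa_state (st : option bool) : nat :=
  match st with Some false => 3 | Some true => 1 | None => 5 end.

Lemma gadget_step (st : option bool) (xi yi : bool) :
  foldl delta5 (dfa_state st) (interleave_seq (alice_gadget xi) (bob_gadget yi)) =
  dfa_state (checker_step st (xi, yi)).
Proof. by case: st => [[]|]; case: xi; case: yi. Qed.

Lemma size_gadgets (T : Type) (gadget : bool -> seq T) (xs : seq bool) :
  (forall b, size (gadget b) = 3) -> size (flatten (map gadget xs)) = 3 * size xs.
Proof. by move=> size3; elim: xs => //= b xs IH; rewrite size_cat IH size3 mulnS. Qed.

Lemma gadgets_simulate_checker (st : option bool) (xs ys : seq bool) :
  size xs = size ys ->
  foldl delta5 (dfa_state st)
    (interleave_seq (flatten (map alice_gadget xs)) (flatten (map bob_gadget ys))) =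
  dfa_state (foldl checker_step st (zip xs ys)).
Proof.
elim: xs ys st => [|xi xs IH] [|yi ys] //= st [size_eq].
rewrite interleave_seq_cat; last by case: xi; case: yi.
by rewrite foldl_cat gadget_step IH.
Qed.

(* The full words: a leading block ab moves the start state 1 to state 3 and
   a trailing block aa accepts exactly from the states 1 and 5. *)
Definition alice_word (xs : seq bool) : seq sym :=
  [:: Some letter_a] ++ flatten (map alice_gadget xs) ++ [:: Some letter_a].
Definition bob_word (ys : seq bool) : seq sym :=
  [:: Some letter_b] ++ flatten (map bob_gadget ys) ++ [:: Some letter_a].

Lemma words_run_checker (xs ys : seq bool) : size xs = size ys ->
  inL5 (interleave_seq (alice_word xs) (bob_word ys)) =
  checker_accepts (foldl checker_step (Some false) (zip xs ys)).
Proof.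
move=> size_eq; rewrite /alice_word /bob_word.
rewrite interleave_seq_cat // interleave_seq_cat; last
  by rewrite (size_gadgets _ size_alice_gadget) size_eq
             (size_gadgets _ size_bob_gadget).
rewrite /inL5 !foldl_cat -[foldl delta5 1 _]/(dfa_state (Some false)).
rewrite (gadgets_simulate_checker (Some false) size_eq).
by case: (foldl checker_step _ _) => [[]|].
Qed.

Lemma size_alice_word (n : nat) (x : n.-tuple bool) : size (alice_word x) == 3 * n + 2.
Proof.
by rewrite /= size_cat (size_gadgets _ size_alice_gadget) size_tuple addn1 addn2.
Qed.

Lemma size_bob_word (n : nat) (y : n.-tuple bool) : size (bob_word y) == 3 * n + 2.
Proof.
by rewrite /= size_cat (size_gadgets _ size_bob_gadget) size_tuple addn1 addn2.
Qed.

Definition alice_tuple (n : nat) (x : n.-tuple bool) : (3 * n + 2).-tuple sym :=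
  Tuple (size_alice_word x).
Definition bob_tuple (n : nat) (y : n.-tuple bool) : (3 * n + 2).-tuple sym :=
  Tuple (size_bob_word y).

Lemma reduction_correct (n : nat) (x y : n.-tuple bool) : PIP2_dom x y ->
  inL5 (interleave (alice_tuple x) (bob_tuple y)) = PIP2 x y.
Proof.
move=> dom_xy; rewrite -checker_decides //.
by apply: words_run_checker; rewrite !size_tuple.
Qed.

Theorem mainTheorem17 :
  exists c : nat, forall n : nat, exists t : nat,
    t <= c * n.+1 /\
    exists (A : n.-tuple bool -> t.-tuple sym) (B : n.-tuple bool -> t.-tuple sym),
      (forall x y : n.-tuple bool, PIP2_dom x y ->
          inL5 (interleave (A x) (B y)) = PIP2 x y) /\
      N1_PIP2 n <= N1_L5 t.
Proof.
exists 5 => n; exists (3 * n + 2); split.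
  by rewrite mulnS addnC leq_add // leq_mul2r orbT.
exists (@alice_tuple n), (@bob_tuple n); split; first exact: reduction_correct.
apply: (N1_reduction (@reduction_correct n)).
have inputs_le : 2 ^ n <= 3 ^ (3 * n + 2).
  apply: (@leq_trans (2 ^ (3 * n + 2))); last by rewrite leq_exp2r // addn2.
  by rewrite leq_pexp2l // mulSn -addnA leq_addr.
by rewrite !card_tuple card_option card_bool leq_mul.
Qed.
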